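(* Let $d, N, s \ge 1$ and let $\mathbf{x}[1],\ldots,\mathbf{x}[N] \in \mathbb{R}^{d}$ be jointly Gaussian, zero-mean random vectors with $\mathrm{E}\{\mathbf{x}[n]\mathbf{x}^{T}[n']\} = \delta_{n,n'}\mathbf{C}[n]$, where the covariance matrices satisfy $0<\alpha[n] \le \lambda_{\min}(\mathbf{C}[n]) \le \lambda_{\max}(\mathbf{C}[n]) \le \beta[n]$ for given constants $\beta[n]\ge\alpha[n]>0$. Let $\mathbf{K}[n] := (\mathbf{C}[n])^{-1}$. Define the conditional independence graph $\mathcal{G}=(\mathcal{V},\mathcal{E})$ with $\mathcal{V}=\{1,\ldots,d\}$ by: for $a\neq b$, $(a,b)\notin\mathcal{E}$ iff $(\mathbf{K}[n])_{a,b}=0$ for all $n\in\{1,\ldots,N\}$. Let $\mathcal{N}(r)=\{t\in\mathcal{V}:(r,t)\in\mathcal{E}\}$ and assume $|\mathcal{N}(r)|\le s$ for all $r$. Define for $a\ne b$ the partial correlation $$\rho_{a,b} := \frac{1}{N}\sum_{n=1}^{N} \alpha[n]\Big[ (\mathbf{K}[n])_{a,b} / (\mathbf{K}[n])_{a,a}\Big]^2,$$ and assume there is $\rho_{\min}>0$ with $\rho_{a,b}\ge\rho_{\min}$ whenever $(a,b)\in\mathcal{E}$. For $i\in\mathcal{V}$ let $\mathbf{x}_i[\cdot]=(x_i[1],\ldots,x_i[N])^T$, and for $r\in\mathcal{V}$ and $\mathcal{T}\subseteq\mathcal{V}\setminus\{r\}$ let $$\mathrm{CV}(r,\mathcal{T})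 := \frac{1}{N}\,\mathrm{Tr}\Big\{ \mathrm{cov}\big\{ \mathbf{x}_r[\cdot] \,\big|\, \{\mathbf{x}_t[\cdot]\}_{t\in\mathcal{T}} \big\} \Big\}.$$ Let $\widetilde{\mathbf{K}}[r,r]$ denote the $N\times N$ diagonal matrix $\mathrm{diag}\big((\mathbf{K}[1])_{r,r},\ldots,(\mathbf{K}[N])_{r,r}\big)$ (equivalently, the $(r,r)$-th $N\times N$ block of the inverse covariance matrix of the component-wise stacked vector $(\mathbf{x}_1[\cdot]^T,\ldots,\mathbf{x}_d[\cdot]^T)^T$). Then for every $r\in\mathcal{V}$ and every $\mathcal{T}\subseteq\mathcal{V}\setminus\{r\}$ with $|\mathcal{T}|\le s$: (i) if $\mathcal{N}(r)\setminus\mathcal{T}\neq\emptyset$, then $\mathrm{CV}(r,\mathcal{T}) \ge \rho_{\min} + \frac{1}{N}\mathrm{Tr}\{\widetilde{\mathbf{K}}[r,r]^{-1}\}$; (ii) if $\mathcal{N}(r)\subseteq\mathcal{T}$, then $\mathrm{CV}(r,\mathcal{T}) = \frac{1}{N}\mathrm{Tr}\{\widetilde{\mathbf{K}}[r,r]^{-1}\}$.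
   Context: $\delta_{n,n'}$ is the Kronecker delta; $\lambda_{\min},\lambda_{\max}$ denote the smallest and largest eigenvalues. $\mathrm{cov}\{\mathbf{y}\mid\mathbf{z}\}$ denotes the conditional covariance matrix of $\mathbf{y}$ given $\mathbf{z}$ (deterministic for jointly Gaussian vectors). The graph $\mathcal{G}$ is an undirected simple graph; $(a,b)\in\mathcal{E}$ and $(b,a)\in\mathcal{E}$ mean the same edge. *)

From HB Require Import structures.
From mathcomp Require Import all_boot all_order all_algebra.
From mathcomp Require Import reals.
Set Implicit Arguments. Unset Strict Implicit. Unset Printing Implicit Defensive.
Import Order.TTheory GRing.Theory Num.Theory.
Local Open Scope ring_scope.

Section Defs.
Variables (R : realType) (d N : nat).

(* Covariance (as a function on a finite index type) of the stacked vector
   (x_a[n])_{(a,n)} with E{x[n] x[n']^T} = delta_{n,n'} C[n]. *)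
Definition stack_cov (C : 'I_N -> 'M[R]_d) : 'I_d * 'I_N -> 'I_d * 'I_N -> R :=
  fun i j => if i.2 == j.2 then C i.2 i.1 j.1 else 0.

Definition subcov {I : finType} (S : I -> I -> R) (A B : {set I}) : 'M[R]_(#|A|, #|B|) :=
  \matrix_(i, j) S (enum_val i) (enum_val j).

(* Conditional covariance cov{y_A | y_B} of a zero-mean jointly Gaussian vector
   with covariance S: Schur complement S_AA - S_AB S_BB^{-1} S_BA. *)
Definition cond_cov {I : finType} (S : I -> I -> R) (A B : {set I}) : 'M[R]_#|A| :=
  subcov S A A - subcov S A B *m invmx (subcov S B B) *m subcov S B A.

Definition prec (C : 'I_N -> 'M[R]_d) (n : 'I_N) : 'M[R]_d := invmx (C n).

Definition cig_edge (C : 'I_N -> 'M[R]_d) (a b : 'I_d) : bool :=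
  (a != b) && [exists n, prec C n a b != 0].

Definition nbhd (C : 'I_N -> 'M[R]_d) (r : 'I_d) : {set 'I_d} :=
  [set t | cig_edge C r t].

Definition pcorr (C : 'I_N -> 'M[R]_d) (alpha : 'I_N -> R) (a b : 'I_d) : R :=
  (N%:R)^-1 * \sum_(n < N) alpha n * (prec C n a b / prec C n a a) ^+ 2.

Definition CV (C : 'I_N -> 'M[R]_d) (r : 'I_d) (T : {set 'I_d}) : R :=
  (N%:R)^-1 * \tr (cond_cov (stack_cov C)
                     [set i : 'I_d * 'I_N | i.1 == r]
                     [set i : 'I_d * 'I_N | i.1 \in T]).

Definition Ktilde (C : 'I_N -> 'M[R]_d) (r : 'I_d) : 'M[R]_N :=
  diag_mx (\row_(n < N) prec C n r r).

End Defs.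

From HB Require Import structures.
From mathcomp Require Import all_boot all_order all_algebra.
From mathcomp Require Import reals complex.
From mathcomp Require Import ring.
Set Implicit Arguments. Unset Strict Implicit. Unset Printing Implicit Defensive.
Import Order.TTheory GRing.Theory Num.Theory.
Local Open Scope sesquilinear_scope.
Local Open Scope ring_scope.

(** The samples x[1], ..., x[N] are independent, so the covariance S of the stacked
    vector is block diagonal, one block C[n] per sample. The diagonal entries of
    cov{x_r[.] | x_T[.]} are the Schur complements S_aa - S_aB S_BB^-1 S_Ba with
    a = (r, n), B = T x {1..N}, i.e. the minima of y^T S y over the y with y_a = 1
    that vanish outside {a} u B, and y^T S y is at least the contribution of block n.
    There, u := K[n]_{r,.} / K[n]_{rr} satisfies C[n] u = e_r / K[n]_{rr},
    so every y with y_r = 1 has y^T C[n] y = 1/K[n]_{rr} + (y - u)^T C[n] (y - u)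
    >= 1/K[n]_{rr} + alpha[n] |y - u|^2. A neighbour b of r outside T forces y_b = 0
    while u_b = K[n]_{rb} / K[n]_{rr}; averaging the excess alpha[n] u_b^2 over n gives
    rho_{r,b} >= rho_min. If N(r) is contained in T, then u itself is admissible and
    the minimum is exactly 1/K[n]_{rr}, the n-th diagonal entry of Ktilde[r,r]^-1. *)

Lemma row_unit_neq0 (F : fieldType) n (P : 'M[F]_n) i : P \in unitmx -> row i P != 0.
Proof.
rewrite -row_free_unit => /row_freePn Pfree; apply/eqP => Pi0.
by apply: Pfree; exists i; rewrite Pi0 sub0mx.
Qed.

Section NormalQuadForm.
Variables (C : numClosedFieldType) (n : nat) (A : 'M[C]_n).
Hypothesis normalA : A \is normalmx.

Let P := spectralmx A.
Let D := spectral_diag A.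

Lemma spectral_diag_eigenvalue i : eigenvalue A (D 0 i).
Proof.
have /orthomx_spectralP defA := normalA.
apply/eigenvalueP; exists (row i P); last exact/row_unit_neq0/spectral_unit.
rewrite [X in _ *m X]defA -row_mul !mulmxA mulmxV ?spectral_unit // mul1mx.
by apply/rowP => j; rewrite mul_diag_mx !mxE.
Qed.

Lemma normalmx_quad_ge (a : C) :
  (forall i, a <= D 0 i) -> forall z : 'rV_n, a * (z *m z^t*) 0 0 <= (z *m A *m z^t*) 0 0.
Proof.
move=> aD z; have /orthomx_spectralP defA := normalA.
have Pu : P \is unitarymx by apply: spectral_unitarymx.
pose w := z *m P^t*.
have wE : w^t* = P *m z^t* by rewrite /w trmx_mul map_mxM trmxCK.
have -> : z *m A *m z^t* = w *m diag_mx D *m w^t*.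
  by rewrite wE /w -invmx_unitary // {1}defA !mulmxA.
have -> : z *m z^t* = w *m w^t*.
  by rewrite wE /w -invmx_unitary // -(mulmxA z) (mulmxA _ P) mulVmx ?spectral_unit // mul1mx.
rewrite !mxE mulr_sumr; apply: ler_sum => j _; rewrite mul_mx_diag !mxE.
by rewrite mulrAC [X in _ <= X]mulrC ler_wpM2r // mul_conjC_ge0.
Qed.

End NormalQuadForm.

Lemma conj_real_complex (R : realType) (x : R) : Num.conj x%:C%C = x%:C%C.
Proof. by apply: conj_Creal; apply/complex_realP; exists x. Qed.

Lemma symmx_quad_ge (R : realType) n (A : 'M[R]_n) (a : R) : A^T = A ->
    (forall lam, eigenvalue A lam -> a <= lam) ->
  forall x : 'rV_n, a * (x *m x^T) 0 0 <= (x *m A *m x^T) 0 0.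
Proof.
move=> symA aA x; pose toC := map_mx (real_complex R).
have hermA : toC _ _ A \is hermsymmx.
  apply/is_hermitianmxP; rewrite expr0 scale1r; apply/matrixP => i j.
  by rewrite !mxE conj_real_complex -{1}symA mxE.
have realC m p (M : 'M[R]_(m, p)) : (toC _ _ M)^t* = toC _ _ M^T.
  by apply/matrixP => i j; rewrite !mxE conj_real_complex.
have aD i : a%:C%C <= spectral_diag (toC _ _ A) 0 i.
  have /mxOverP/(_ 0 i)/complex_realP[lam Hlam] := hermitian_spectral_diag_real hermA.
  (* [lecR] is stated for the rcfType structure of [R]: [etrans] lets unification
     identify it with the realType one, where [rewrite] fails. *)
  rewrite Hlam; apply: etrans (lecR a lam) (aA _ _).
  rewrite eigenvalue_root_char -(fmorph_root (real_complex R)) map_char_poly.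
  move: (spectral_diag_eigenvalue (hermitian_normalmx hermA) i).
  by rewrite Hlam eigenvalue_root_char.
apply: etrans (esym (lecR _ _)) _; rewrite rmorphM /=.
have := normalmx_quad_ge (hermitian_normalmx hermA) aD (toC _ _ x).
by rewrite !realC -!map_mxM !mxE.
Qed.

Definition qform (R : pzRingType) (I : finType) (S : I -> I -> R) (y : I -> R) : R :=
  \sum_i y i * \sum_j S i j * y j.

Section QuadForm.
Variables (R : comPzRingType) (I : finType) (S : I -> I -> R).

Lemma sumr_delta (a : I) (F : I -> R) : \sum_i (i == a)%:R * F i = F a.
Proof.
by rewrite (bigD1 a) //= eqxx mul1r big1 ?addr0 // => i /negbTE ->; rewrite mul0r.
Qed.

Lemma sumr_deltar (a : I) (F : I -> R) : \sum_i F i * (i == a)%:R = F a.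
Proof. by rewrite -(sumr_delta a); apply: eq_bigr => i _; rewrite mulrC. Qed.

Lemma sumr_delta_comp (J : finType) (G : I -> R) (e : J -> I) (w : J -> R) :
  \sum_i G i * \sum_j (i == e j)%:R * w j = \sum_j G (e j) * w j.
Proof.
under eq_bigr do rewrite mulr_sumr.
rewrite exchange_big /=; apply: eq_bigr => j _.
by under eq_bigr do rewrite mulrA; rewrite -mulr_suml sumr_deltar.
Qed.

Lemma eq_qform y z : y =1 z -> qform S y = qform S z.
Proof.
move=> yz; apply: eq_bigr => i _; rewrite yz; congr (_ * _).
by apply: eq_bigr => j _; rewrite yz.
Qed.

Hypothesis symS : forall i j, S i j = S j i.

Lemma qformD y z :
  qform S (fun i => y i + z i) =
  qform S y + qform S z + 2 * \sum_i z i * \sum_j S i j * y j.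
Proof.
have cross : \sum_i y i * \sum_j S i j * z j = \sum_i z i * \sum_j S i j * y j.
  under eq_bigr do rewrite mulr_sumr.
  rewrite exchange_big /=; apply: eq_bigr => j _; rewrite mulr_sumr.
  by apply: eq_bigr => i _; rewrite symS; ring.
have expand i : (y i + z i) * \sum_j S i j * (y j + z j) =
    y i * (\sum_j S i j * y j) + z i * (\sum_j S i j * z j) +
    (y i * (\sum_j S i j * z j) + z i * \sum_j S i j * y j).
  by under eq_bigr do rewrite mulrDr; rewrite big_split /=; ring.
by rewrite /qform (eq_bigr _ (fun i _ => expand i)) !big_split /= cross; ring.
Qed.

End QuadForm.

Section SchurComplement.
Variables (R : realType) (I : finType) (S : I -> I -> R) (B : {set I}).

Definition schur_val (a : I) : R :=
  S a a - \sum_j S a (enum_val j) * \sum_l invmx (subcov S B B) j l * S (enum_val l) a.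

Lemma cond_cov_diag (A : {set I}) i : cond_cov S A B i i = schur_val (enum_val i).
Proof.
rewrite /cond_cov /schur_val !mxE; congr (_ - _).
under eq_bigr do rewrite !mxE mulr_suml.
rewrite exchange_big /=; apply: eq_bigr => j _; rewrite mxE mulr_sumr.
by apply: eq_bigr => l _; rewrite ?mxE mulrA.
Qed.

Lemma tr_cond_cov (A : {set I}) : \tr (cond_cov S A B) = \sum_(a in A) schur_val a.
Proof. by rewrite big_enum_val; apply: eq_bigr => i _; rewrite cond_cov_diag. Qed.

Lemma subcov_unitmx :
  (forall z, qform S z = 0 -> forall i, z i = 0) -> subcov S B B \in unitmx.
Proof.
move=> defS; rewrite -row_free_unit; apply: inj_row_free => v vS0.
pose z i := \sum_j (i == enum_val j)%:R * v 0 j.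
have zE j : z (enum_val j) = v 0 j.
  rewrite /z (bigD1 j) //= eqxx mul1r big1 ?addr0 // => l /negbTE ne.
  by rewrite (inj_eq enum_val_inj) eq_sym ne mul0r.
have /defS z0 : qform S z = 0.
  rewrite /qform; under eq_bigr do rewrite sumr_delta_comp mulrC.
  rewrite sumr_delta_comp; under eq_bigr do rewrite mulr_suml.
  rewrite exchange_big /= big1 // => l _.
  have /rowP/(_ l) := vS0; rewrite !mxE => vSl.
  transitivity (v 0 l * \sum_j v 0 j * subcov S B B j l); last by rewrite vSl mulr0.
  by rewrite mulr_sumr; apply: eq_bigr => j _; rewrite mxE; ring.
by apply/rowP => j; rewrite mxE -zE z0.
Qed.

Hypothesis unitBB : subcov S B B \in unitmx.

Lemma schur_residual a : a \notin B ->
  exists y : I -> R, [/\ y a = 1, (forall i, i != a -> i \notin B -> y i = 0),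
    (forall i, i \in B -> \sum_j S i j * y j = 0) & qform S y = schur_val a].
Proof.
(* [y] is e_a - S_BB^-1 S_Ba, extended by zero outside B. *)
move=> aB; pose w j := \sum_l invmx (subcov S B B) j l * S (enum_val l) a.
pose y i := (i == a)%:R - \sum_j (i == enum_val j)%:R * w j.
have yB i : i \notin B -> \sum_j (i == enum_val j)%:R * w j = 0.
  move=> iB; apply: big1 => j _; case: eqP => [ij|_]; last by rewrite mul0r.
  by move: iB; rewrite ij enum_valP.
have Sy i : \sum_j S i j * y j = S i a - \sum_m S i (enum_val m) * w m.
  under eq_bigr do rewrite mulrBr.
  by rewrite big_split /= sumrN sumr_deltar sumr_delta_comp.
have SyB i : i \in B -> \sum_j S i j * y j = 0.
  move=> iB; rewrite Sy -(enum_rankK_in iB iB); set l := enum_rank_in iB i.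
  apply/eqP; rewrite subr_eq0; apply/eqP.
  have -> : S (enum_val l) a = \sum_q (1%:M : 'M[R]_#|B|) l q * S (enum_val q) a.
    by under eq_bigr do rewrite mxE eq_sym; rewrite sumr_delta.
  rewrite /w -(mulmxV unitBB); under [RHS]eq_bigr do rewrite mulr_sumr.
  rewrite exchange_big /=; apply: eq_bigr => q _.
  by rewrite mxE mulr_suml; apply: eq_bigr => m _; rewrite mxE mulrA.
exists y; split => //.
- by rewrite /y eqxx yB // subr0.
- by move=> i ia iB; rewrite /y (negbTE ia) yB // subr0.
rewrite /qform; under eq_bigr do rewrite mulrBl.
rewrite big_split /= sumrN sumr_delta Sy.
under [X in _ - X]eq_bigr do rewrite mulrC.
rewrite sumr_delta_comp [X in _ - X]big1 ?subr0 // => j _.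
by rewrite SyB ?enum_valP // mul0r.
Qed.

Hypotheses (symS : forall i j, S i j = S j i) (psdS : forall z, 0 <= qform S z).

Lemma schur_val_min a y : a \notin B -> y a = 1 ->
  (forall i, i != a -> i \notin B -> y i = 0) -> schur_val a <= qform S y.
Proof.
move=> aB ya1 ya0; have [y0 [y0a1 y0a0 Sy0B <-]] := schur_residual aB.
pose z i := y i - y0 i.
have cross : \sum_i z i * \sum_j S i j * y0 j = 0.
  apply: big1 => i _; have [iB|iB] := boolP (i \in B); first by rewrite Sy0B ?mulr0.
  have [->|ia] := eqVneq i a; first by rewrite /z ya1 y0a1 subrr mul0r.
  by rewrite /z ya0 ?y0a0 ?subrr ?mul0r.
rewrite (eq_qform _ (_ : y =1 fun i => y0 i + z i)); last by move=> i; rewrite addrC subrK.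
by rewrite qformD // cross mulr0 addr0 lerDl.
Qed.

End SchurComplement.

Lemma sumr_pair (R : nmodType) (I J : finType) (F : I * J -> R) :
  \sum_p F p = \sum_i \sum_j F (i, j).
Proof. by rewrite pair_bigA; apply: eq_bigr => [[]]. Qed.

Section StackedCovariance.
Variables (R : realType) (d N : nat) (C : 'I_N -> 'M[R]_d).

Lemma qform_stack_cov y :
  qform (stack_cov C) y = \sum_n qform (C n) (fun a => y (a, n)).
Proof.
rewrite /qform sumr_pair exchange_big /=; apply: eq_bigr => n _.
apply: eq_bigr => a _; congr (_ * _); rewrite sumr_pair.
apply: eq_bigr => b _; rewrite (bigD1 n) //= big1 ?addr0 /stack_cov /= ?eqxx //.
by move=> m /negbTE; rewrite eq_sym => ->; rewrite mul0r.
Qed.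

Lemma stack_cov_sym : (forall n, (C n)^T = C n) ->
  forall i j, stack_cov C i j = stack_cov C j i.
Proof.
move=> symC [a n] [b m]; rewrite /stack_cov /= eq_sym.
by case: eqP => [->|//]; rewrite -[in LHS]symC mxE.
Qed.

End StackedCovariance.

Lemma tr_invmx_diag (R : fieldType) n (D : 'rV[R]_n) :
  (forall i, D 0 i != 0) -> \tr (invmx (diag_mx D)) = \sum_i (D 0 i)^-1.
Proof.
move=> D_neq0; pose Dinv := \row_i (D 0 i)^-1.
have DDinv : diag_mx D *m diag_mx Dinv = 1%:M.
  apply/matrixP => i j; rewrite mul_diag_mx !mxE.
  by case: eqP => [->|]; rewrite ?mulr1n ?mulr0n ?mulr0 // mulfV.
have [unitD _] := mulmx1_unit DDinv.
have -> : invmx (diag_mx D) = diag_mx Dinv.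
  by rewrite -[LHS]mulmx1 -DDinv mulmxA mulVmx // mul1mx.
by rewrite mxtrace_diag; apply: eq_bigr => i _; rewrite mxE.
Qed.

Lemma sumr_sqr_ge0 (R : realDomainType) (I : finType) (P : pred I) (y : I -> R) :
  0 <= \sum_(i | P i) y i ^+ 2.
Proof. by apply: sumr_ge0 => i _; exact: sqr_ge0. Qed.

Section PinnedQuadForm.
Variables (R : realType) (d : nat) (C : 'M[R]_d) (a : R).
Hypotheses (symC : C^T = C) (a_gt0 : 0 < a).
Hypothesis a_le_eig : forall lam, eigenvalue C lam -> a <= lam.

Lemma sym_entry i j : C i j = C j i.
Proof. by rewrite -[in LHS]symC mxE. Qed.

Lemma qform_ge_sumr_sqr y : a * \sum_i y i ^+ 2 <= qform C y.
Proof.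
have := symmx_quad_ge symC a_le_eig (\row_i y i).
have -> : (\row_i y i *m (\row_i y i)^T) 0 0 = \sum_i y i ^+ 2.
  by rewrite mxE; apply: eq_bigr => i _; rewrite !mxE expr2.
congr (_ <= _); rewrite /qform mxE; under eq_bigr do rewrite mxE mulr_suml.
rewrite exchange_big /=; apply: eq_bigr => i _; rewrite mulr_sumr.
by apply: eq_bigr => j _; rewrite !mxE mulrA.
Qed.

Lemma qform_ge0 y : 0 <= qform C y.
Proof.
apply: le_trans (qform_ge_sumr_sqr y).
by rewrite mulr_ge0 ?sumr_sqr_ge0 // ltW.
Qed.

Lemma qform_eq0 y : qform C y = 0 -> forall i, y i = 0.
Proof.
move=> qy0 i; have := qform_ge_sumr_sqr y; rewrite qy0 pmulr_rle0 // => sum_le0.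
have /psumr_eq0P sq0 : \sum_i y i ^+ 2 = 0 by apply/le_anti; rewrite sum_le0 sumr_sqr_ge0.
by apply/eqP; rewrite -sqrf_eq0 sq0 // => j _; exact: sqr_ge0.
Qed.

Lemma eig_gt0_unitmx : C \in unitmx.
Proof.
rewrite -row_free_unit; apply: inj_row_free => v vC0; have [//|v_neq0] := eqVneq v 0.
have /a_le_eig : eigenvalue C 0 by apply/eigenvalueP; exists v; rewrite ?scale0r.
by rewrite leNgt a_gt0.
Qed.

Definition normed_prec_row (r t : 'I_d) : R := invmx C r t / invmx C r r.

Lemma mul_sym_prec r t : \sum_s C t s * invmx C r s = (t == r)%:R.
Proof.
transitivity ((invmx C *m C) r t); last by rewrite mulVmx ?eig_gt0_unitmx // mxE eq_sym.
by rewrite mxE; apply: eq_bigr => s _; rewrite mulrC sym_entry.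
Qed.

Lemma prec_diag_gt0 r : 0 < invmx C r r.
Proof.
have qK : qform C (invmx C r) = invmx C r r.
  by rewrite /qform; under eq_bigr do rewrite mul_sym_prec; rewrite sumr_deltar.
have Krr_ge0 : 0 <= invmx C r r by rewrite -qK qform_ge0.
rewrite lt_def Krr_ge0 andbT; apply/eqP => Krr0.
have := mul_sym_prec r r; rewrite eqxx big1 => [/eqP|s _]; first by rewrite eq_sym oner_eq0.
by rewrite (qform_eq0 (y := invmx C r)) ?qK // mulr0.
Qed.

Lemma normed_prec_row_id r : normed_prec_row r r = 1.
Proof. exact/divff/lt0r_neq0/prec_diag_gt0. Qed.

Lemma mul_sym_normed_prec_row r i :
  \sum_j C i j * normed_prec_row r j = (i == r)%:R / invmx C r r.
Proof. by rewrite -mul_sym_prec mulr_suml; apply: eq_bigr => j _; rewrite mulrA. Qed.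

Lemma qform_normed_prec_row r : qform C (normed_prec_row r) = (invmx C r r)^-1.
Proof.
rewrite /qform; under eq_bigr do rewrite mul_sym_normed_prec_row mulrA.
by rewrite -mulr_suml sumr_deltar normed_prec_row_id mul1r.
Qed.

Lemma qform_pinned_ge r y : y r = 1 ->
  (invmx C r r)^-1 + a * \sum_t (y t - normed_prec_row r t) ^+ 2 <= qform C y.
Proof.
move=> yr1; set u := normed_prec_row r.
rewrite (eq_qform _ (_ : y =1 fun t => u t + (y t - u t))); last by move=> t; rewrite addrC subrK.
rewrite qformD; last exact: sym_entry.
under [X in 2 * X]eq_bigr do rewrite mul_sym_normed_prec_row mulrA.
rewrite -mulr_suml sumr_deltar yr1 /u normed_prec_row_id subrr !mul0r mulr0 addr0.
rewrite qform_normed_prec_row lerD2l.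
exact: qform_ge_sumr_sqr.
Qed.

End PinnedQuadForm.

Section ConditionalVariance.
Variables (R : realType) (d N : nat) (C : 'I_N -> 'M[R]_d) (alpha : 'I_N -> R).
Hypotheses (symC : forall n, (C n)^T = C n) (alpha_gt0 : forall n, 0 < alpha n).
Hypothesis alpha_le_eig : forall n lam, eigenvalue (C n) lam -> alpha n <= lam.
Variables (r : 'I_d) (T : {set 'I_d}).
Hypothesis rT : r \notin T.

Let qform_block_ge0 n (y : 'I_d -> R) : 0 <= qform (C n) y.
Proof. exact: qform_ge0 (symC n) (alpha_gt0 n) (@alpha_le_eig n) y. Qed.

Let S := stack_cov C.
Let B := [set i : 'I_d * 'I_N | i.1 \in T].

Lemma qform_stack_cov_ge_block y n : qform (C n) (fun a => y (a, n)) <= qform S y.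
Proof.
rewrite qform_stack_cov (bigD1 n) //= lerDl.
by apply: sumr_ge0 => m _; exact: qform_block_ge0.
Qed.

Lemma qform_stack_cov_ge0 y : 0 <= qform S y.
Proof.
by rewrite qform_stack_cov; apply: sumr_ge0 => n _; exact: qform_block_ge0.
Qed.

Lemma unitmx_stack_subcov : subcov S B B \in unitmx.
Proof.
apply: subcov_unitmx => y qy0 [a n].
apply: (qform_eq0 (symC n) (alpha_gt0 n) (@alpha_le_eig n) (y := fun a => y (a, n))).
by apply/le_anti; rewrite qform_block_ge0 andbT -qy0 qform_stack_cov_ge_block.
Qed.

Lemma CV_sum_schur_val : CV C r T = N%:R^-1 * \sum_n schur_val S B (r, n).
Proof.
rewrite /CV tr_cond_cov big_mkcond sumr_pair (bigD1 r) //= [X in _ + X]big1 => [|a ar].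
  by rewrite addr0; congr (_ * _); apply: eq_bigr => n _; rewrite inE eqxx.
by apply: big1 => n _; rewrite inE /= (negbTE ar).
Qed.

Lemma schur_val_stack_ge n :
  (prec C n r r)^-1 + alpha n * \sum_(t | (t \notin T) && (t != r)) normed_prec_row (C n) r t ^+ 2
    <= schur_val S B (r, n).
Proof.
have rnB : (r, n) \notin B by rewrite inE.
have [y [yr1 y0 _ <-]] := schur_residual unitmx_stack_subcov rnB.
apply: le_trans (qform_stack_cov_ge_block y n).
apply: le_trans (qform_pinned_ge (symC n) (alpha_gt0 n) (@alpha_le_eig n) yr1).
rewrite lerD2l; apply: ler_wpM2l; first exact: ltW.
rewrite [X in _ <= X](bigID (fun t => (t \notin T) && (t != r))) /= -[X in X <= _]addr0.
apply: lerD; last exact: sumr_sqr_ge0.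
apply: ler_sum => t /andP[tT tr]; rewrite y0 ?sub0r ?sqrrN ?inE //.
by apply: contra tr => /eqP[->].
Qed.

Lemma schur_val_stack_le n : nbhd C r \subset T -> schur_val S B (r, n) <= (prec C n r r)^-1.
Proof.
move=> nbhdT; pose y (i : 'I_d * 'I_N) := (i.2 == n)%:R * normed_prec_row (C n) r i.1.
have rnB : (r, n) \notin B by rewrite inE.
have -> : (prec C n r r)^-1 = qform S y.
  rewrite qform_stack_cov (bigD1 n) //= [X in _ + X]big1 => [|m /negbTE mn].
    rewrite addr0 -(qform_normed_prec_row (symC n) (alpha_gt0 n) (@alpha_le_eig n)).
    by apply: eq_qform => t; rewrite /y eqxx mul1r.
  by rewrite /qform big1 // => t _; rewrite /y mn !mul0r.
apply: (schur_val_min unitmx_stack_subcov (stack_cov_sym symC) qform_stack_cov_ge0 rnB).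
  by rewrite /y eqxx mul1r (normed_prec_row_id (symC n) (alpha_gt0 n) (@alpha_le_eig n)).
move=> [t m] tn; rewrite inE /= => tT; rewrite /y /=.
have [mn | _] := eqVneq m n; last by rewrite mul0r.
subst m.
have tr : t != r by apply: contra tn => /eqP->.
rewrite mul1r /normed_prec_row.
suff -> : prec C n r t = 0 by rewrite mul0r.
apply/eqP; apply: contraNT tT => Krt; apply: (subsetP nbhdT).
by rewrite inE /cig_edge eq_sym tr; apply/existsP; exists n.
Qed.

Lemma tr_inv_Ktilde : \tr (invmx (Ktilde C r)) = \sum_n (prec C n r r)^-1.
Proof.
rewrite tr_invmx_diag => [|n]; first by apply: eq_bigr => n _; rewrite mxE.
by rewrite mxE; exact/lt0r_neq0/(prec_diag_gt0 (symC n) (alpha_gt0 n) (@alpha_le_eig n)).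
Qed.

Lemma CV_ge_of_edge b : b \notin T -> cig_edge C r b ->
  N%:R^-1 * \sum_n ((prec C n r r)^-1 + alpha n * (prec C n r b / prec C n r r) ^+ 2)
    <= CV C r T.
Proof.
move=> bT /andP[rb _]; rewrite CV_sum_schur_val ler_wpM2l ?invr_ge0 ?ler0n //.
apply: ler_sum => n _; apply: le_trans (schur_val_stack_ge n); rewrite lerD2l.
apply: ler_wpM2l; first exact: ltW.
by rewrite (bigD1 b) /= ?bT ?(eq_sym b) //= lerDl sumr_sqr_ge0.
Qed.

Lemma CV_eq_of_nbhd_sub : nbhd C r \subset T -> CV C r T = N%:R^-1 * \tr (invmx (Ktilde C r)).
Proof.
move=> nbhdT; rewrite CV_sum_schur_val tr_inv_Ktilde; congr (_ * _).
apply: eq_bigr => n _; apply/le_anti; rewrite schur_val_stack_le //=.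
apply: le_trans (schur_val_stack_ge n); rewrite lerDl.
by rewrite mulr_ge0 ?sumr_sqr_ge0 // ltW.
Qed.

End ConditionalVariance.

Theorem theorem1 (R : realType) (d N s : nat) (hd : (0 < d)%N) (hN : (0 < N)%N)
    (hs : (0 < s)%N)
    (C : 'I_N -> 'M[R]_d) (alpha beta : 'I_N -> R) (rho_min : R)
    (hsym : forall n, (C n)^T = C n)
    (halpha : forall n, 0 < alpha n)
    (halphabeta : forall n, alpha n <= beta n)
    (heig : forall n (lam : R), eigenvalue (C n) lam -> alpha n <= lam <= beta n)
    (hdeg : forall r, (#|nbhd C r| <= s)%N)
    (hrho : 0 < rho_min)
    (hrhoE : forall a b, cig_edge C a b -> rho_min <= pcorr C alpha a b) :
  forall (r : 'I_d) (T : {set 'I_d}), r \notin T -> (#|T| <= s)%N ->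
    (nbhd C r :\: T != set0 ->
       rho_min + (N%:R)^-1 * \tr (invmx (Ktilde C r)) <= CV C r T) /\
    (nbhd C r \subset T ->
       CV C r T = (N%:R)^-1 * \tr (invmx (Ktilde C r))).
Proof.
move=> r T rT _.
have alpha_le_eig n lam : eigenvalue (C n) lam -> alpha n <= lam by move/heig/andP=> [].
split; last exact: CV_eq_of_nbhd_sub.
case/set0Pn => b; rewrite !inE => /andP[bT rb].
apply: le_trans (CV_ge_of_edge hsym halpha alpha_le_eig rT bT rb).
rewrite big_split mulrDr (tr_inv_Ktilde hsym halpha alpha_le_eig) addrC lerD2l.
exact: hrhoE.
Qed.
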